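(* Let $\Omega\subset\mathbb{R}^2_+$ be a bounded Lipschitz open set with $[-\varepsilon_0,\varepsilon_0]\times\{0\}\subset\partial\Omega$, let $\varepsilon\in(0,\varepsilon_0]$, $\lambda\in\mathbb R$, and let $u\in\mathcal Q_\varepsilon$ be a nontrivial weak solution of $-\Delta u=\lambda u$ in $\Omega$, $u=0$ on $\partial\Omega\setminus\Gamma_\varepsilon$, $\partial_\nu u=0$ on $\Gamma_\varepsilon$. Let $j_L,j_R$ be odd positive integers and $\beta_L,\beta_R\in\mathbb R\setminus\{0\}$ be such that, with $\boldsymbol\theta(t)=(\cos t,\sin t)$ and $\boldsymbol\tau(t)=(-\sin t,\cos t)$, as $\delta\to0^+$: $\delta^{-j_L/2}u((-\varepsilon,0)+\delta\boldsymbol\theta(t))\to\beta_L\cos(\frac{j_L}{2}t)$ and $\delta^{-j_R/2}u((\varepsilon,0)+\delta\boldsymbol\theta(t))\to\beta_R\sin(\frac{j_R}{2}t)$ in $C^{1,\sigma}([0,\pi])$, and $\delta^{-j_L/2+1}\nabla u((-\varepsilon,0)+\delta\boldsymbol\theta(t))\to\frac{j_L\beta_L}{2}\big(\cos(\frac{j_L}2t)\boldsymbol\theta(t)-\sin(\frac{j_L}2t)\boldsymbol\tau(t)\big)$, $\delta^{-j_R/2+1}\nabla u((\varepsilon,0)+\delta\boldsymbol\theta(t))\to\frac{j_R\beta_R}{2}\big(\sin(\frac{j_R}2t)\boldsymbol\theta(t)+\cos(\frac{j_R}2t)\boldsymbol\tau(t)\big)$ in $C^{0,\sigma}([0,\pi])$,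 for all $\sigma\in(0,1)$. Define $$M(\varepsilon,u,\lambda)=\lim_{\delta\to0^+}\int_{\mathbb{R}^2_+\cap\partial A^\varepsilon_\delta}\Big(\tfrac12|\nabla u|^2x\cdot\mathbf n-\frac{\partial u}{\partial\mathbf n}(x\cdot\nabla u)-\tfrac\lambda2u^2\,x\cdot\mathbf n\Big)ds,$$ where $A^\varepsilon_\delta=D^+_\delta(-\varepsilon,0)\cup D^+_\delta(\varepsilon,0)$ and $\mathbf n$ is the unit normal to $\partial A^\varepsilon_\delta$ pointing into $A^\varepsilon_\delta$. Then the limit exists and $$M(\varepsilon,u,\lambda)=\begin{cases}0,&j_L>1,\ j_R>1,\\-\varepsilon\frac\pi8\beta_L^2,&j_L=1,\ j_R>1,\\-\varepsilon\frac\pi8\beta_R^2,&j_L>1,\ j_R=1,\\-\varepsilon\frac\pi8(\beta_L^2+\beta_R^2),&j_L=j_R=1.\end{cases}$$ In particular $M(\varepsilon,u,\lambda)\le0$.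
   Context: $\Gamma_\varepsilon=[-\varepsilon,\varepsilon]\times\{0\}$, $\mathcal Q_\varepsilon=\{u\in H^1(\Omega):\text{trace of }u=0\text{ on }\partial\Omega\setminus\Gamma_\varepsilon\}$. $D^+_\delta(a)=\{x\in\mathbb{R}^2:|x-a|<\delta,\ x_2>0\}$. The orientation of $\mathbf n$ is that of the exterior normal to the region $D^+_r\setminus A^\varepsilon_\delta$ (with $D^+_r$ the upper half-disk of radius $r>\varepsilon+\delta$ centered at $0$), i.e. on the half-circle $\{|x\mp(\varepsilon,0)|=\delta, x_2>0\}$ one has $\mathbf n=-(x\mp(\varepsilon,0))/\delta$. *)

From Stdlib Require Import Reals Lra.
Open Scope R_scope.

Definition open2 (Om : R -> R -> Prop) : Prop :=
  forall x1 x2, Om x1 x2 -> exists r, 0 < r /\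
    forall y1 y2, (y1 - x1)^2 + (y2 - x2)^2 < r^2 -> Om y1 y2.

Definition bounded2 (Om : R -> R -> Prop) : Prop :=
  exists K, forall x1 x2, Om x1 x2 -> Rabs x1 <= K /\ Rabs x2 <= K.

Definition in_boundary2 (Om : R -> R -> Prop) (p1 p2 : R) : Prop :=
  ~ Om p1 p2 /\
  forall r, 0 < r -> exists y1 y2, (y1 - p1)^2 + (y2 - p2)^2 < r^2 /\ Om y1 y2.

Definition helmholtz_in (Om : R -> R -> Prop) (lam : R)
  (u ux uy uxx uyy : R -> R -> R) : Prop :=
  forall x1 x2, Om x1 x2 ->
    derivable_pt_lim (fun s => u s x2) x1 (ux x1 x2) /\
    derivable_pt_lim (fun s => u x1 s) x2 (uy x1 x2) /\
    derivable_pt_lim (fun s => ux s x2) x1 (uxx x1 x2) /\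
    derivable_pt_lim (fun s => uy x1 s) x2 (uyy x1 x2) /\
    - (uxx x1 x2 + uyy x1 x2) = lam * u x1 x2.

Definition unif_conv_0PI (f : R -> R -> R) (g : R -> R) : Prop :=
  forall eta, 0 < eta -> exists d, 0 < d /\
    forall delta t, 0 < delta < d -> 0 <= t <= PI ->
      Rabs (f delta t - g t) < eta.

(* Integrand of M on the half circle {|x - (a,0)| = δ, x2 > 0},
   parametrised by x = (a,0) + δ(cos t, sin t), t in [0,PI], ds = δ dt,
   with normal n = -(cos t, sin t) (pointing into the half disk). *)
Definition arc_integrand (lam a delta : R) (u ux uy : R -> R -> R) (t : R) : R :=
  let x1 := a + delta * cos t in
  let x2 := delta * sin t in
  let n1 := - cos t in
  let n2 := - sin t in
  let g1 := ux x1 x2 in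
  let g2 := uy x1 x2 in
  let xn := x1 * n1 + x2 * n2 in
  let dnu := g1 * n1 + g2 * n2 in
  let xgu := x1 * g1 + x2 * g2 in
  (/2 * (g1^2 + g2^2) * xn - dnu * xgu - lam / 2 * (u x1 x2)^2 * xn) * delta.

Definition is_RInt (f : R -> R) (a b v : R) : Prop :=
  exists pr : Riemann_integrable f a b, RiemannInt pr = v.

Definition M_value (eps : R) (jL jR : nat) (bL bR : R) : R :=
  if Nat.eqb jL 1 then
    (if Nat.eqb jR 1 then - eps * (PI / 8) * (bL^2 + bR^2)
     else - eps * (PI / 8) * bL^2)
  else
    (if Nat.eqb jR 1 then - eps * (PI / 8) * bR^2 else 0).

From Stdlib Require Import Reals Lra Lia ClassicalEpsilon.
Open Scope R_scope.

(* Near a corner (a,0) write the gradient as δ^(j/2-1) times a rescaled gradient and u as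
   δ^(j/2) times a rescaled value; both converge uniformly in t by hypothesis. The integrand
   on the half circle (arc length δ dt included) is then δ^(j-1) times a quadratic form in the
   rescaled gradient, plus O(δ^(j+1)). So it converges uniformly to 0 when j > 1, and when
   j = 1 to a·(½(A²-B²)cos t + AB sin t). By the half-angle formulas the limiting rescaled
   gradient is (β/2)(cos(t/2), sin(t/2)) at the left corner and (β/2)(-sin(t/2), cos(t/2))
   at the right one, so that quadratic form is the constant ±β²/8 and the density is
   -εβ²/8 in both cases; integrating over [0,π] gives M. *)

Definition bounded_0PI (g : R -> R) : Prop :=
  exists K, forall t, 0 <= t <= PI -> Rabs (g t) <= K.

Lemma bounded_0PI_const c : bounded_0PI (fun _ => c).
Proof. exists (Rabs c); intros; lra. Qed.

Lemma bounded_0PI_cos h : bounded_0PI (fun t => cos (h t)).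
Proof. exists 1; intros; apply Rabs_le, COS_bound. Qed.

Lemma bounded_0PI_sin h : bounded_0PI (fun t => sin (h t)).
Proof. exists 1; intros; apply Rabs_le, SIN_bound. Qed.

Lemma bounded_0PI_plus g1 g2 :
  bounded_0PI g1 -> bounded_0PI g2 -> bounded_0PI (fun t => g1 t + g2 t).
Proof.
intros [K1 B1] [K2 B2]; exists (K1 + K2); intros t Ht.
specialize (B1 t Ht); specialize (B2 t Ht); pose proof (Rabs_triang (g1 t) (g2 t)); lra.
Qed.

Lemma bounded_0PI_opp g : bounded_0PI g -> bounded_0PI (fun t => - g t).
Proof. intros [K B]; exists K; intros t Ht; rewrite Rabs_Ropp; auto. Qed.

Lemma bounded_0PI_minus g1 g2 :
  bounded_0PI g1 -> bounded_0PI g2 -> bounded_0PI (fun t => g1 t - g2 t).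
Proof. intros B1 B2; exact (bounded_0PI_plus _ _ B1 (bounded_0PI_opp _ B2)). Qed.

Lemma bounded_0PI_mult g1 g2 :
  bounded_0PI g1 -> bounded_0PI g2 -> bounded_0PI (fun t => g1 t * g2 t).
Proof.
intros [K1 B1] [K2 B2]; exists (Rabs K1 * Rabs K2); intros t Ht.
rewrite Rabs_mult; apply Rmult_le_compat; try apply Rabs_pos;
  eapply Rle_trans; [apply B1 | apply Rle_abs | apply B2 | apply Rle_abs]; assumption.
Qed.

Lemma bounded_0PI_pow g n : bounded_0PI g -> bounded_0PI (fun t => g t ^ n).
Proof.
intros B; induction n as [|n IH]; [exact (bounded_0PI_const 1) | exact (bounded_0PI_mult _ _ B IH)].
Qed.

Lemma unif_conv_0PI_fixed g : unif_conv_0PI (fun _ t => g t) g.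
Proof. intros eta Heta; exists 1; split; [lra|]; intros; rewrite Rminus_diag, Rabs_R0; lra. Qed.

Lemma unif_conv_0PI_id : unif_conv_0PI (fun d _ => d) (fun _ => 0).
Proof.
intros eta Heta; exists eta; split; [lra|]; intros d t Hd _.
rewrite Rminus_0_r, Rabs_pos_eq; lra.
Qed.

Lemma unif_conv_0PI_plus f1 g1 f2 g2 :
  unif_conv_0PI f1 g1 -> unif_conv_0PI f2 g2 ->
  unif_conv_0PI (fun d t => f1 d t + f2 d t) (fun t => g1 t + g2 t).
Proof.
intros H1 H2 eta Heta.
destruct (H1 (eta / 2)) as [d1 [Hd1 P1]]; [lra|].
destruct (H2 (eta / 2)) as [d2 [Hd2 P2]]; [lra|].
exists (Rmin d1 d2); split; [now apply Rmin_glb_lt|]; intros d t Hd Ht.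
pose proof (Rmin_l d1 d2); pose proof (Rmin_r d1 d2).
specialize (P1 d t ltac:(lra) Ht); specialize (P2 d t ltac:(lra) Ht).
replace (f1 d t + f2 d t - (g1 t + g2 t)) with ((f1 d t - g1 t) + (f2 d t - g2 t)) by ring.
pose proof (Rabs_triang (f1 d t - g1 t) (f2 d t - g2 t)); lra.
Qed.

Lemma unif_conv_0PI_opp f g :
  unif_conv_0PI f g -> unif_conv_0PI (fun d t => - f d t) (fun t => - g t).
Proof.
intros H eta Heta; destruct (H eta Heta) as [d [Hd P]]; exists d; split; [assumption|].
intros d' t Hd' Ht; replace (- f d' t - - g t) with (- (f d' t - g t)) by ring.
rewrite Rabs_Ropp; auto.
Qed.

Lemma unif_conv_0PI_minus f1 g1 f2 g2 :
  unif_conv_0PI f1 g1 -> unif_conv_0PI f2 g2 ->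
  unif_conv_0PI (fun d t => f1 d t - f2 d t) (fun t => g1 t - g2 t).
Proof. intros H1 H2; exact (unif_conv_0PI_plus _ _ _ _ H1 (unif_conv_0PI_opp _ _ H2)). Qed.

Lemma Rabs_mult_sub_le x y a b e K :
  Rabs (x - a) <= e -> Rabs (y - b) <= e -> e <= 1 -> Rabs a <= K -> Rabs b <= K ->
  Rabs (x * y - a * b) <= e * (2 * K + 1).
Proof.
intros Hx Hy He Ha Hb.
replace (x * y - a * b) with ((x - a) * (y - b) + (x - a) * b + a * (y - b)) by ring.
pose proof (Rabs_triang ((x - a) * (y - b) + (x - a) * b) (a * (y - b))).
pose proof (Rabs_triang ((x - a) * (y - b)) ((x - a) * b)).
rewrite !Rabs_mult in *.
pose proof (Rabs_pos (x - a)); pose proof (Rabs_pos (y - b)); pose proof (Rabs_pos a); pose proof (Rabs_pos b).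
assert (Rabs (x - a) * Rabs (y - b) <= e * 1) by (apply Rmult_le_compat; lra).
assert (Rabs (x - a) * Rabs b <= e * K) by (apply Rmult_le_compat; lra).
assert (Rabs a * Rabs (y - b) <= K * e) by (apply Rmult_le_compat; lra).
lra.
Qed.

Lemma unif_conv_0PI_mult f1 g1 f2 g2 :
  unif_conv_0PI f1 g1 -> unif_conv_0PI f2 g2 -> bounded_0PI g1 -> bounded_0PI g2 ->
  unif_conv_0PI (fun d t => f1 d t * f2 d t) (fun t => g1 t * g2 t).
Proof.
intros H1 H2 [K1 B1] [K2 B2] eta Heta.
set (K := Rabs K1 + Rabs K2).
assert (HK : 0 <= K) by (unfold K; pose proof (Rabs_pos K1); pose proof (Rabs_pos K2); lra).
set (e := Rmin 1 (eta / (2 * (2 * K + 1)))).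
assert (He : 0 < e) by (apply Rmin_glb_lt; [lra | apply Rdiv_lt_0_compat; lra]).
assert (HeK : e * (2 * K + 1) < eta).
{ assert (e <= eta / (2 * (2 * K + 1))) by apply Rmin_r.
  apply Rle_lt_trans with (eta / (2 * (2 * K + 1)) * (2 * K + 1)).
  - apply Rmult_le_compat_r; lra.
  - replace (eta / (2 * (2 * K + 1)) * (2 * K + 1)) with (eta / 2) by (field; lra); lra. }
destruct (H1 e He) as [d1 [Hd1 P1]]; destruct (H2 e He) as [d2 [Hd2 P2]].
exists (Rmin d1 d2); split; [now apply Rmin_glb_lt|]; intros d t Hd Ht.
pose proof (Rmin_l d1 d2); pose proof (Rmin_r d1 d2).
apply Rle_lt_trans with (e * (2 * K + 1)); [|exact HeK].
apply Rabs_mult_sub_le.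
- apply Rlt_le, P1; [lra | exact Ht].
- apply Rlt_le, P2; [lra | exact Ht].
- apply Rmin_l.
- specialize (B1 t Ht); pose proof (Rle_abs K1); pose proof (Rabs_pos K2); unfold K; lra.
- specialize (B2 t Ht); pose proof (Rle_abs K2); pose proof (Rabs_pos K1); unfold K; lra.
Qed.

Lemma unif_conv_0PI_pow f g n :
  unif_conv_0PI f g -> bounded_0PI g ->
  unif_conv_0PI (fun d t => f d t ^ n) (fun t => g t ^ n).
Proof.
intros H B; induction n as [|n IH]; [exact (unif_conv_0PI_fixed (fun _ => 1))|].
exact (unif_conv_0PI_mult _ _ _ _ H IH B (bounded_0PI_pow _ n B)).
Qed.

Lemma unif_conv_0PI_ext f f' g g' :
  unif_conv_0PI f g ->
  (forall d t, 0 < d < 1 -> 0 <= t <= PI -> f d t = f' d t) ->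
  (forall t, 0 <= t <= PI -> g t = g' t) ->
  unif_conv_0PI f' g'.
Proof.
intros H Ef Eg eta Heta; destruct (H eta Heta) as [d [Hd P]].
exists (Rmin d 1); split; [apply Rmin_glb_lt; lra|]; intros d' t Hd' Ht.
pose proof (Rmin_l d 1); pose proof (Rmin_r d 1).
rewrite <- Ef, <- Eg by (assumption || lra); apply P; [lra | exact Ht].
Qed.

Ltac unif_conv_0PI_auto := repeat first
  [ assumption
  | apply unif_conv_0PI_id | apply unif_conv_0PI_fixed
  | apply unif_conv_0PI_plus | apply unif_conv_0PI_minus | apply unif_conv_0PI_opp
  | apply unif_conv_0PI_mult | apply unif_conv_0PI_pow
  | apply bounded_0PI_const | apply bounded_0PI_cos | apply bounded_0PI_sin
  | apply bounded_0PI_plus | apply bounded_0PI_minus | apply bounded_0PI_opp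
  | apply bounded_0PI_mult | apply bounded_0PI_pow ].

Lemma RiemannInt_near_const f c eta (pr : Riemann_integrable f 0 PI) :
  (forall t, 0 <= t <= PI -> Rabs (f t - c) < eta) ->
  Rabs (RiemannInt pr - c * PI) <= eta * PI.
Proof.
intros H; pose proof PI_RGT_0.
pose proof (RiemannInt_P15 (RiemannInt_P14 0 PI (c + eta))) as Eup.
pose proof (RiemannInt_P15 (RiemannInt_P14 0 PI (c - eta))) as Elow.
assert (Iup : RiemannInt pr <= RiemannInt (RiemannInt_P14 0 PI (c + eta))).
{ apply RiemannInt_P19; [lra|]; intros t Ht; unfold fct_cte.
  specialize (H t ltac:(lra)); apply Rabs_def2 in H; lra. }
assert (Ilow : RiemannInt (RiemannInt_P14 0 PI (c - eta)) <= RiemannInt pr).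
{ apply RiemannInt_P19; [lra|]; intros t Ht; unfold fct_cte.
  specialize (H t ltac:(lra)); apply Rabs_def2 in H; lra. }
rewrite Eup in Iup; rewrite Elow in Ilow; apply Rabs_le; nra.
Qed.

Lemma RiemannInt_limit_unif_conv_const (F : R -> R -> R) (d0 c : R) :
  (forall d, 0 < d < d0 -> forall t, 0 <= t <= PI -> continuity_pt (F d) t) ->
  unif_conv_0PI F (fun _ => c) ->
  exists I : R -> R,
    (forall d, 0 < d < d0 -> is_RInt (F d) 0 PI (I d)) /\
    limit1_in I (fun d => 0 < d < d0) (c * PI) 0.
Proof.
intros Hcont Hconv; pose proof PI_RGT_0.
assert (Hint : forall d, 0 < d < d0 -> exists v, is_RInt (F d) 0 PI v).
{ intros d Hd.
  assert (pr : Riemann_integrable (F d) 0 PI)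
    by (apply continuity_implies_RiemannInt; [lra | exact (Hcont d Hd)]).
  now exists (RiemannInt pr), pr. }
exists (fun d => epsilon (inhabits 0) (is_RInt (F d) 0 PI)); split.
{ intros d Hd; apply epsilon_spec, Hint, Hd. }
intros e He.
destruct (Hconv (e / (2 * PI))) as [d1 [Hd1 Hclose]]; [apply Rdiv_lt_0_compat; lra|].
exists d1; split; [exact Hd1|]; intros d [Hd Hdist]; simpl in *; unfold R_dist in *.
rewrite Rminus_0_r, Rabs_pos_eq in Hdist by lra.
destruct (epsilon_spec (inhabits 0) (is_RInt (F d) 0 PI) (Hint d Hd)) as [pr <-].
apply Rle_lt_trans with (e / (2 * PI) * PI).
- apply RiemannInt_near_const; intros t Ht; apply Hclose; [lra | exact Ht].
- replace (e / (2 * PI) * PI) with (e / 2) by (field; lra); lra.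
Qed.

Lemma arc_integrand_continuous lam a d u ux uy t :
  continuity_pt (fun s => u (a + d * cos s) (d * sin s)) t ->
  continuity_pt (fun s => ux (a + d * cos s) (d * sin s)) t ->
  continuity_pt (fun s => uy (a + d * cos s) (d * sin s)) t ->
  continuity_pt (arc_integrand lam a d u ux uy) t.
Proof.
intros Hu Hux Huy; unfold arc_integrand; cbv zeta.
repeat first
  [ assumption | apply continuity_cos | apply continuity_sin
  | apply continuity_pt_plus | apply continuity_pt_minus | apply continuity_pt_opp
  | apply continuity_pt_mult | apply continuity_pt_const; intros ? ?; reflexivity ].
Qed.

Lemma Rpower_opp_cancel d x v : 0 < d -> v = Rpower d (- x) * (Rpower d x * v).
Proof.
intros Hd; rewrite <- Rmult_assoc, <- Rpower_plus, Rplus_opp_l, Rpower_O by exact Hd; ring.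
Qed.

Lemma pow_eq_Rpower_sqr d n x : 0 < d -> INR n = 2 * x + 1 -> d ^ n = Rpower d x ^ 2 * d.
Proof.
intros Hd Hn.
rewrite <- Rpower_pow, Hn by exact Hd.
replace (2 * x + 1) with (x * INR 2 + 1) by (simpl; ring).
rewrite Rpower_plus, Rpower_1, <- Rpower_mult, Rpower_pow by (exact Hd || apply exp_pos).
reflexivity.
Qed.

Definition x_dot_n (a d t : R) : R := (a + d * cos t) * - cos t + d * sin t * - sin t.

Definition gradient_flux (a d t A B : R) : R :=
  /2 * (A ^ 2 + B ^ 2) * x_dot_n a d t
  - (A * - cos t + B * - sin t) * ((a + d * cos t) * A + d * sin t * B).

Lemma arc_integrand_rescaled lam a d u ux uy j t : 0 < d -> (1 <= j)%nat ->
  arc_integrand lam a d u ux uy t =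
  d ^ (j - 1) * gradient_flux a d t
     (Rpower d (- INR j / 2 + 1) * ux (a + d * cos t) (d * sin t))
     (Rpower d (- INR j / 2 + 1) * uy (a + d * cos t) (d * sin t))
  - lam / 2 * d ^ (j + 1) * (Rpower d (- INR j / 2) * u (a + d * cos t) (d * sin t)) ^ 2
     * x_dot_n a d t.
Proof.
intros Hd Hj; unfold arc_integrand, gradient_flux, x_dot_n; cbv zeta.
set (vx := ux (a + d * cos t) (d * sin t)).
set (vy := uy (a + d * cos t) (d * sin t)).
set (vu := u (a + d * cos t) (d * sin t)).
set (A := Rpower d (- INR j / 2 + 1) * vx).
set (B := Rpower d (- INR j / 2 + 1) * vy).
set (U := Rpower d (- INR j / 2) * vu).
assert (EA : vx = Rpower d (- (- INR j / 2 + 1)) * A) by (apply Rpower_opp_cancel, Hd).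
assert (EB : vy = Rpower d (- (- INR j / 2 + 1)) * B) by (apply Rpower_opp_cancel, Hd).
assert (EU : vu = Rpower d (- (- INR j / 2)) * U) by (apply Rpower_opp_cancel, Hd).
assert (Eminus : d ^ (j - 1) = Rpower d (- (- INR j / 2 + 1)) ^ 2 * d).
{ apply pow_eq_Rpower_sqr; [exact Hd|]; rewrite minus_INR by exact Hj; simpl; field. }
assert (Eplus : d ^ (j + 1) = Rpower d (- (- INR j / 2)) ^ 2 * d).
{ apply pow_eq_Rpower_sqr; [exact Hd|]; rewrite plus_INR; simpl; field. }
clearbody A B U; rewrite EA, EB, EU, Eminus, Eplus; ring.
Qed.

Lemma gradient_flux_center a t A B :
  gradient_flux a 0 t A B = a * (/2 * (A ^ 2 - B ^ 2) * cos t + A * B * sin t).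
Proof. unfold gradient_flux, x_dot_n; field. Qed.

Lemma arc_integrand_unif_conv lam a u ux uy j gA gB gU : (1 <= j)%nat ->
  unif_conv_0PI (fun d t => Rpower d (- INR j / 2 + 1) * ux (a + d * cos t) (d * sin t)) gA ->
  unif_conv_0PI (fun d t => Rpower d (- INR j / 2 + 1) * uy (a + d * cos t) (d * sin t)) gB ->
  unif_conv_0PI (fun d t => Rpower d (- INR j / 2) * u (a + d * cos t) (d * sin t)) gU ->
  bounded_0PI gA -> bounded_0PI gB -> bounded_0PI gU ->
  unif_conv_0PI (fun d => arc_integrand lam a d u ux uy)
    (fun t => if Nat.eqb j 1
              then a * (/2 * (gA t ^ 2 - gB t ^ 2) * cos t + gA t * gB t * sin t) else 0).
Proof.
intros Hj HA HB HU BA BB BU.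
assert (Hlim : unif_conv_0PI
  (fun d t => d ^ (j - 1) * gradient_flux a d t
     (Rpower d (- INR j / 2 + 1) * ux (a + d * cos t) (d * sin t))
     (Rpower d (- INR j / 2 + 1) * uy (a + d * cos t) (d * sin t))
   - lam / 2 * d ^ (j + 1) * (Rpower d (- INR j / 2) * u (a + d * cos t) (d * sin t)) ^ 2
     * x_dot_n a d t)
  (fun t => 0 ^ (j - 1) * gradient_flux a 0 t (gA t) (gB t)
   - lam / 2 * 0 ^ (j + 1) * gU t ^ 2 * x_dot_n a 0 t)).
{ unfold gradient_flux, x_dot_n; unif_conv_0PI_auto. }
apply (unif_conv_0PI_ext _ _ _ _ Hlim).
- intros d t Hd _; symmetry; apply arc_integrand_rescaled; [lra | exact Hj].
- intros t _; rewrite gradient_flux_center, (pow_i (j + 1)) by lia.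
  destruct (Nat.eqb_spec j 1) as [->|Hj1]; [simpl; ring | rewrite pow_i by lia; ring].
Qed.

Lemma left_tip_flux b t :
  let A := INR 1 * b / 2 * (cos (INR 1 / 2 * t) * cos t - sin (INR 1 / 2 * t) * - sin t) in
  let B := INR 1 * b / 2 * (cos (INR 1 / 2 * t) * sin t - sin (INR 1 / 2 * t) * cos t) in
  /2 * (A ^ 2 - B ^ 2) * cos t + A * B * sin t = b ^ 2 / 8.
Proof.
intros A B; subst A B; change (INR 1) with 1.
set (h := 1 / 2 * t); replace t with (2 * h) by (unfold h; field).
rewrite cos_2a, sin_2a.
transitivity (b ^ 2 / 8 * (sin h ^ 2 + cos h ^ 2) ^ 4); [field|].
pose proof (sin2_cos2 h) as Hpyth; unfold Rsqr in Hpyth.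
replace (sin h ^ 2 + cos h ^ 2) with 1 by (simpl; lra); ring.
Qed.

Lemma right_tip_flux b t :
  let A := INR 1 * b / 2 * (sin (INR 1 / 2 * t) * cos t + cos (INR 1 / 2 * t) * - sin t) in
  let B := INR 1 * b / 2 * (sin (INR 1 / 2 * t) * sin t + cos (INR 1 / 2 * t) * cos t) in
  /2 * (A ^ 2 - B ^ 2) * cos t + A * B * sin t = - (b ^ 2 / 8).
Proof.
intros A B; subst A B; change (INR 1) with 1.
set (h := 1 / 2 * t); replace t with (2 * h) by (unfold h; field).
rewrite cos_2a, sin_2a.
transitivity (- (b ^ 2 / 8 * (sin h ^ 2 + cos h ^ 2) ^ 4)); [field|].
pose proof (sin2_cos2 h) as Hpyth; unfold Rsqr in Hpyth.
replace (sin h ^ 2 + cos h ^ 2) with 1 by (simpl; lra); ring.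
Qed.

Definition corner_density (eps : R) (j : nat) (b : R) : R :=
  if Nat.eqb j 1 then - eps * b ^ 2 / 8 else 0.

Lemma corner_density_nonpos eps j b : 0 < eps -> corner_density eps j b <= 0.
Proof.
intros Heps; unfold corner_density; destruct (Nat.eqb j 1); [|lra].
pose proof (pow2_ge_0 b); nra.
Qed.

Lemma M_value_corner_densities eps jL jR bL bR :
  M_value eps jL jR bL bR = corner_density eps jL bL * PI + corner_density eps jR bR * PI.
Proof. unfold M_value, corner_density; destruct (Nat.eqb jL 1), (Nat.eqb jR 1); field. Qed.

Lemma odd_ge1 j : Nat.Odd j -> (1 <= j)%nat.
Proof. intros [m Hm]; lia. Qed.

Lemma left_corner_unif_conv lam eps u ux uy j b : Nat.Odd j ->
  unif_conv_0PI
    (fun d t => Rpower d (- INR j / 2) * u (- eps + d * cos t) (d * sin t))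
    (fun t => b * cos (INR j / 2 * t)) ->
  unif_conv_0PI
    (fun d t => Rpower d (- INR j / 2 + 1) * ux (- eps + d * cos t) (d * sin t))
    (fun t => INR j * b / 2 * (cos (INR j / 2 * t) * cos t - sin (INR j / 2 * t) * (- sin t))) ->
  unif_conv_0PI
    (fun d t => Rpower d (- INR j / 2 + 1) * uy (- eps + d * cos t) (d * sin t))
    (fun t => INR j * b / 2 * (cos (INR j / 2 * t) * sin t - sin (INR j / 2 * t) * cos t)) ->
  unif_conv_0PI (fun d => arc_integrand lam (- eps) d u ux uy) (fun _ => corner_density eps j b).
Proof.
intros Hj Hu Hux Huy.
refine (unif_conv_0PI_ext _ _ _ _
  (arc_integrand_unif_conv lam (- eps) u ux uy j _ _ _ (odd_ge1 j Hj) Hux Huy Hu _ _ _)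
  (fun _ _ _ _ => eq_refl) _); [unif_conv_0PI_auto .. |].
intros t _; unfold corner_density.
destruct (Nat.eqb_spec j 1) as [->|]; [rewrite left_tip_flux; field | reflexivity].
Qed.

Lemma right_corner_unif_conv lam eps u ux uy j b : Nat.Odd j ->
  unif_conv_0PI
    (fun d t => Rpower d (- INR j / 2) * u (eps + d * cos t) (d * sin t))
    (fun t => b * sin (INR j / 2 * t)) ->
  unif_conv_0PI
    (fun d t => Rpower d (- INR j / 2 + 1) * ux (eps + d * cos t) (d * sin t))
    (fun t => INR j * b / 2 * (sin (INR j / 2 * t) * cos t + cos (INR j / 2 * t) * (- sin t))) ->
  unif_conv_0PI
    (fun d t => Rpower d (- INR j / 2 + 1) * uy (eps + d * cos t) (d * sin t))
    (fun t => INR j * b / 2 * (sin (INR j / 2 * t) * sin t + cos (INR j / 2 * t) * cos t)) ->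
  unif_conv_0PI (fun d => arc_integrand lam eps d u ux uy) (fun _ => corner_density eps j b).
Proof.
intros Hj Hu Hux Huy.
refine (unif_conv_0PI_ext _ _ _ _
  (arc_integrand_unif_conv lam eps u ux uy j _ _ _ (odd_ge1 j Hj) Hux Huy Hu _ _ _)
  (fun _ _ _ _ => eq_refl) _); [unif_conv_0PI_auto .. |].
intros t _; unfold corner_density.
destruct (Nat.eqb_spec j 1) as [->|]; [rewrite right_tip_flux; field | reflexivity].
Qed.

Theorem lemmaC5
  (Om : R -> R -> Prop) (eps0 eps lam : R)
  (u ux uy uxx uyy : R -> R -> R)
  (jL jR : nat) (bL bR : R)
  (HOmopen : open2 Om) (HOmbdd : bounded2 Om)
  (HOmhalf : forall x1 x2, Om x1 x2 -> 0 < x2)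
  (HOmseg : forall x1, - eps0 <= x1 <= eps0 -> in_boundary2 Om x1 0)
  (Heps : 0 < eps <= eps0)
  (Hpde : helmholtz_in Om lam u ux uy uxx uyy)
  (Hnontriv : exists x1 x2, Om x1 x2 /\ u x1 x2 <> 0)
  (HjL : Nat.Odd jL) (HjR : Nat.Odd jR) (HbL : bL <> 0) (HbR : bR <> 0)
  (Hreg : exists d, 0 < d /\ forall delta, 0 < delta < d ->
     forall t, 0 <= t <= PI ->
       continuity_pt (fun s => u (- eps + delta * cos s) (delta * sin s)) t /\
       continuity_pt (fun s => ux (- eps + delta * cos s) (delta * sin s)) t /\
       continuity_pt (fun s => uy (- eps + delta * cos s) (delta * sin s)) t /\
       continuity_pt (fun s => u (eps + delta * cos s) (delta * sin s)) t /\
       continuity_pt (fun s => ux (eps + delta * cos s) (delta * sin s)) t /\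
       continuity_pt (fun s => uy (eps + delta * cos s) (delta * sin s)) t)
  (HuL : unif_conv_0PI
     (fun delta t => Rpower delta (- INR jL / 2) * u (- eps + delta * cos t) (delta * sin t))
     (fun t => bL * cos (INR jL / 2 * t)))
  (HgL1 : unif_conv_0PI
     (fun delta t => Rpower delta (- INR jL / 2 + 1) * ux (- eps + delta * cos t) (delta * sin t))
     (fun t => INR jL * bL / 2 * (cos (INR jL / 2 * t) * cos t - sin (INR jL / 2 * t) * (- sin t))))
  (HgL2 : unif_conv_0PI
     (fun delta t => Rpower delta (- INR jL / 2 + 1) * uy (- eps + delta * cos t) (delta * sin t))
     (fun t => INR jL * bL / 2 * (cos (INR jL / 2 * t) * sin t - sin (INR jL / 2 * t) * cos t)))
  (HuR : unif_conv_0PI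
     (fun delta t => Rpower delta (- INR jR / 2) * u (eps + delta * cos t) (delta * sin t))
     (fun t => bR * sin (INR jR / 2 * t)))
  (HgR1 : unif_conv_0PI
     (fun delta t => Rpower delta (- INR jR / 2 + 1) * ux (eps + delta * cos t) (delta * sin t))
     (fun t => INR jR * bR / 2 * (sin (INR jR / 2 * t) * cos t + cos (INR jR / 2 * t) * (- sin t))))
  (HgR2 : unif_conv_0PI
     (fun delta t => Rpower delta (- INR jR / 2 + 1) * uy (eps + delta * cos t) (delta * sin t))
     (fun t => INR jR * bR / 2 * (sin (INR jR / 2 * t) * sin t + cos (INR jR / 2 * t) * cos t))) :
  (exists d, 0 < d /\ exists IL IR : R -> R,
     (forall delta, 0 < delta < d ->
        is_RInt (arc_integrand lam (- eps) delta u ux uy) 0 PI (IL delta) /\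
        is_RInt (arc_integrand lam eps delta u ux uy) 0 PI (IR delta)) /\
     limit1_in (fun delta => IL delta + IR delta) (fun delta => 0 < delta < d)
       (M_value eps jL jR bL bR) 0)
  /\ M_value eps jL jR bL bR <= 0.
Proof.
destruct Heps as [Heps _].
destruct Hreg as [d0 [Hd0 Hreg]].
destruct (RiemannInt_limit_unif_conv_const (fun d => arc_integrand lam (- eps) d u ux uy)
            d0 (corner_density eps jL bL)) as [IL [HIL HlimL]].
{ intros d Hd t Ht; destruct (Hreg d Hd t Ht) as (Hu & Hux & Huy & _).
  apply arc_integrand_continuous; assumption. }
{ apply left_corner_unif_conv; assumption. }
destruct (RiemannInt_limit_unif_conv_const (fun d => arc_integrand lam eps d u ux uy)
            d0 (corner_density eps jR bR)) as [IR [HIR HlimR]].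
{ intros d Hd t Ht; destruct (Hreg d Hd t Ht) as (_ & _ & _ & Hu & Hux & Huy).
  apply arc_integrand_continuous; assumption. }
{ apply right_corner_unif_conv; assumption. }
rewrite M_value_corner_densities; split.
- exists d0; split; [exact Hd0|]; exists IL, IR; split.
  + intros d Hd; split; [apply HIL | apply HIR]; exact Hd.
  + apply limit_plus; assumption.
- pose proof (corner_density_nonpos eps jL bL Heps);
  pose proof (corner_density_nonpos eps jR bR Heps); pose proof PI_RGT_0; nra.
Qed.
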